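(* Let $G$ be a graph not containing $K_{s,s}$. If $G$ contains a rich independent set of size $a$, then $G$ contains $H$ as an induced subgraph.
   Context: Let $H=(A,B;E)$ be a fixed bipartite graph with vertex classes $A$ and $B$ such that every vertex in $B$ has degree at most $k$ in $H$, and write $a=|A|$, $b=|B|$. Let $s$ be a positive integer. A set of vertices $S\subset V(G)$ is called rich if for every subset $T\subseteq S$ with $|T|\leq k$, there are at least $(4bs)^{b}$ vertices $v\in V(G)\setminus S$ with $N(v)\cap S=T$, i.e. which are adjacent to all vertices of $T$ and non-adjacent to all vertices of $S\setminus T$. *)

From mathcomp Require Import all_boot.
Set Implicit Arguments. Unset Strict Implicit. Unset Printing Implicit Defensive.

Definition simple_graph (V : finType) (e : rel V) : Prop :=
  symmetric e /\ irreflexive e.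

Definition contains_Kss (V : finType) (e : rel V) (s : nat) : Prop :=
  exists X Y : {set V}, [/\ #|X| = s, #|Y| = s, [disjoint X & Y] &
    forall x y, x \in X -> y \in Y -> e x y].

Definition independent (V : finType) (e : rel V) (S : {set V}) : Prop :=
  forall x y, x \in S -> y \in S -> ~~ e x y.

Definition rich (V : finType) (e : rel V) (k b s : nat) (S : {set V}) : Prop :=
  forall T : {set V}, T \subset S -> #|T| <= k ->
    (4 * b * s) ^ b <= #|[set v | (v \notin S) & ([set u in S | e v u] == T)]|.

(* Adjacency of the bipartite graph H = (A, B; E) on vertex set A + B. *)
Definition bip_adj (A B : finType) (E : A -> B -> bool) (u w : A + B) : bool :=
  match u, w with
  | inl x, inr y => E x y
  | inr y, inl x => E x y
  | _, _ => false
  end.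

Definition induced_bip_copy (V : finType) (e : rel V)
    (A B : finType) (E : A -> B -> bool) : Prop :=
  exists f : A + B -> V, injective f /\
    forall u w, e (f u) (f w) = bip_adj E u w.

From mathcomp Require Import all_boot.
From mathcomp Require Import zify.

(* Embed A into S arbitrarily. By richness, each y in B has at least
   (4bs)^b candidate vertices outside S whose neighbourhood in S is exactly the
   image of N_H(y); it remains to choose one candidate per y so that the chosen
   vertices are distinct and pairwise non-adjacent. In a K_{s,s}-free graph
   fewer than s vertices can each miss at most P vertices of a set of size at
   least s(P+1), since s of them would have s common neighbours there. Hence
   the candidates for the first y include a vertex w missing more than
   P = (4bs)^(b-1) candidates of every other y; keeping only the non-neighbours
   of w and recursing on the remaining b-1 vertices of B costs a factor 4bs. *)

Set Implicit Arguments.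
Unset Strict Implicit.
Unset Printing Implicit Defensive.

Lemma leq_card_bigcup (I T : finType) (J : {pred I}) (F : I -> {set T}) :
  #|\bigcup_(i in J) F i| <= \sum_(i in J) #|F i|.
Proof.
elim/big_rec2: _ => [|i n U _ IH]; first by rewrite cards0.
by rewrite (leq_trans (leq_card_setU _ _)) ?leq_add2l.
Qed.

Lemma exists_subset_card (T : finType) (D : {set T}) n :
  n <= #|D| -> exists2 X : {set T}, X \subset D & #|X| = n.
Proof.
case/card_geqP=> xs [uniq_xs size_xs sub_xs].
exists [set x in xs]; first by apply/subsetP=> x; rewrite inE => /sub_xs.
by rewrite cardsE -size_xs; apply/card_uniqP.
Qed.

Lemma exists_inj_into (T A : finType) (S : {set T}) :
  #|A| <= #|S| -> exists2 g : A -> T, injective g & forall x, g x \in S.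
Proof.
move=> leAS; exists (fun x => @enum_val _ (mem S) (widen_ord leAS (enum_rank x))).
  by move=> x1 x2 /enum_val_inj [] /ord_inj /enum_rank_inj.
by move=> x; apply: enum_valP.
Qed.

Section KssFreeGraph.

Variables (V : finType) (e : rel V) (s : nat).
Hypotheses (e_sym : symmetric e) (e_irr : irreflexive e).
Hypotheses (s_gt0 : 0 < s) (Kss_free : ~ contains_Kss e s).

Definition nbhd (u : V) : {set V} := [set t | e u t].

Lemma card_common_nbhd_lt (X : {set V}) :
  #|X| = s -> #|\bigcap_(x in X) nbhd x| < s.
Proof.
move=> cardX; rewrite ltnNge; apply/negP=> /exists_subset_card[Y subY cardY].
apply: Kss_free; exists X, Y; split=> //.
  apply/pred0P=> u /=; apply/negbTE/andP=> -[uX /(subsetP subY) /bigcapP uN].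
  by have := uN u uX; rewrite inE e_irr.
by move=> x y xX /(subsetP subY) /bigcapP/(_ x xX); rewrite inE.
Qed.

Lemma card_le_common_nbhd_missing (X C : {set V}) :
  #|C| <= #|\bigcap_(x in X) nbhd x| + \sum_(x in X) #|C :\: nbhd x|.
Proof.
have subC : C \subset \bigcap_(x in X) nbhd x :|: \bigcup_(x in X) (C :\: nbhd x).
  apply/subsetP=> u uC; rewrite inE.
  have [uN | /forall_inPn[x xX nux]] := boolP [forall x in X, u \in nbhd x].
    by apply/orP; left; apply/bigcapP=> x /(forall_inP uN).
  by apply/orP; right; apply/bigcupP; exists x; rewrite // inE nux.
rewrite (leq_trans (subset_leq_card subC)) // (leq_trans (leq_card_setU _ _)) //.
by rewrite leq_add2l leq_card_bigcup.
Qed.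

Lemma card_few_missing_lt (C D : {set V}) (P : nat) :
  s * P + s <= #|C| -> (forall u, u \in D -> #|C :\: nbhd u| <= P) -> #|D| < s.
Proof.
move=> bigC fewD; rewrite ltnNge; apply/negP=> /exists_subset_card[X subX cardX].
have := card_le_common_nbhd_missing X C; have := card_common_nbhd_lt cardX.
have : \sum_(x in X) #|C :\: nbhd x| <= s * P.
  rewrite -cardX -sum_nat_const; apply: leq_sum=> x /(subsetP subX); exact: fewD.
lia.
Qed.

Lemma exists_vertex_missing_many (J : finType) (C0 : {set V}) (C : J -> {set V})
    (P : nat) :
  #|J| * s < #|C0| -> (forall j, s * P + s <= #|C j|) ->
  exists2 w, w \in C0 & forall j, P < #|C j :\: nbhd w|.
Proof.
move=> bigC0 bigC.
pose bad j := [set u in C0 | #|C j :\: nbhd u| <= P].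
have card_bad j : #|bad j| < s.
  by apply: (card_few_missing_lt (bigC j))=> u; rewrite inE => /andP[].
have ltU : #|\bigcup_j bad j| < #|C0|.
  rewrite (leq_ltn_trans (leq_card_bigcup _ _)) // (leq_ltn_trans _ bigC0) //.
  by rewrite -sum_nat_const; apply: leq_sum=> j _; apply: ltnW.
have /subsetPn[w wC0 wU] : ~~ (C0 \subset \bigcup_j bad j).
  by apply: contraL ltU=> /subset_leq_card; rewrite leqNgt.
exists w=> // j; rewrite ltnNge; apply: contra wU=> missj.
by apply/bigcupP; exists j; rewrite // inE wC0.
Qed.

Definition independent_transversal (B : finType) (C : B -> {set V}) (v : B -> V) :=
  [/\ injective v, forall y, v y \in C y & forall y z, ~~ e (v y) (v z)].

Lemma independent_transversal_extend (B : finType) (y0 : B) (C : B -> {set V})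
    (w : V) :
  w \in C y0 ->
  (exists v' : {y : B | y != y0} -> V,
    independent_transversal (fun z => C (val z) :\: nbhd w :\ w) v') ->
  exists v : B -> V, independent_transversal C v.
Proof.
move=> wC [v' [v'_inj v'C' v'_indep]].
have v'P z : [/\ v' z \in C (val z), v' z != w & ~~ e w (v' z)].
  by have := v'C' z; rewrite !inE=> /and3P[-> -> ->].
pose v y := if insub y is Some z then v' z else w.
have v_y0 : v y0 = w by rewrite /v insubF ?eqxx.
have v_val z : v (val z) = v' z by rewrite /v valK.
have B_split (Q : B -> Prop) :
    Q y0 -> (forall z : {y : B | y != y0}, Q (val z)) -> forall y, Q y.
  by move=> Qy0 Qval y; have [->|ny] := eqVneq y y0; last exact: (Qval (Sub y ny)).
exists v; split.
- move=> y1 y2; elim/B_split: y1=> [|z1]; elim/B_split: y2=> [|z2];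
    rewrite ?v_y0 ?v_val //.
  + by move=> wz2; case: (v'P z2); rewrite -wz2 eqxx.
  + by move=> z1w; case: (v'P z1); rewrite z1w eqxx.
  + by move/v'_inj->.
- by elim/B_split=> [|z]; rewrite ?v_y0 ?v_val //; case: (v'P z).
- elim/B_split=> [|z1]; elim/B_split=> [|z2]; rewrite ?v_y0 ?v_val ?e_irr //.
  + by case: (v'P z2).
  + by rewrite e_sym; case: (v'P z1).
Qed.

Lemma exists_independent_transversal (B : finType) (b : nat) (C : B -> {set V}) :
  #|B| <= b -> (forall y, (4 * b * s) ^ #|B| <= #|C y|) ->
  exists v : B -> V, independent_transversal C v.
Proof.
move def_n: #|B| => n; elim: n B C def_n => [|n IHn] B C cardB leBb bigC.
  have B0 (y : B) : False by move: cardB; rewrite (cardD1 y).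
  by exists (fun y => match B0 y with end); split=> y; case: (B0 y).
have /card_gt0P[y0 _] : 0 < #|B| by rewrite cardB.
have cardB' : #|{: {y : B | y != y0}}| = n by rewrite card_sig cardC1 cardB.
pose P := (4 * b * s) ^ n.
have P_gt0 : 0 < P by rewrite expn_gt0 !muln_gt0 s_gt0 (leq_trans _ leBb).
have [ltC leC] : n * s < 4 * b * s * P /\ s * P + s <= 4 * b * s * P.
  have : n * s < b * s by rewrite ltn_pmul2r.
  have : s <= s * P by rewrite leq_pmulr.
  have := leq_pmulr (b * s) P_gt0; nia.
have [w wC wC'] : exists2 w, w \in C y0 &
    forall z : {y : B | y != y0}, P < #|C (val z) :\: nbhd w|.
  apply: exists_vertex_missing_many=> [|z].
    by rewrite cardB' (leq_trans ltC) // -expnS.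
  by rewrite (leq_trans leC) // -expnS.
apply: (independent_transversal_extend wC).
apply: (IHn _ _ cardB' (ltnW leBb))=> z; have := wC' z.
by rewrite (cardsD1 w); case: (w \in _)=> /=; lia.
Qed.

End KssFreeGraph.

Lemma induced_bip_copy_of_parts (V A B : finType) (e : rel V) (E : A -> B -> bool)
    (g : A -> V) (v : B -> V) :
  symmetric e -> injective g -> injective v -> (forall x y, g x != v y) ->
  (forall x1 x2, ~~ e (g x1) (g x2)) -> (forall y1 y2, ~~ e (v y1) (v y2)) ->
  (forall x y, e (g x) (v y) = E x y) -> induced_bip_copy e E.
Proof.
move=> e_sym g_inj v_inj g_neq_v g_indep v_indep gvE.
exists (fun u => match u with inl x => g x | inr y => v y end); split.
  case=> [x1|y1] [x2|y2] /= f12.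
  - by rewrite (g_inj _ _ f12).
  - by case/eqP: (g_neq_v x1 y2).
  - by case/eqP: (g_neq_v x2 y1).
  - by rewrite (v_inj _ _ f12).
case=> [x1|y1] [x2|y2] /=.
- exact/negbTE.
- exact: gvE.
- by rewrite e_sym gvE.
- exact/negbTE.
Qed.

Theorem lemma2p3 (A B : finType) (E : A -> B -> bool) (k s : nat)
    (hdeg : forall y : B, #|[set x : A | E x y]| <= k)
    (hs : 0 < s)
    (V : finType) (e : rel V) (hG : simple_graph e)
    (hK : ~ contains_Kss e s)
    (S : {set V}) (hSind : independent e S) (hSsize : #|S| = #|A|)
    (hSrich : rich e k #|B| s S) :
  induced_bip_copy e E.
Proof.
case: hG=> e_sym e_irr.
have [g g_inj gS] := @exists_inj_into V A S (eq_leq (esym hSsize)).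
pose C y := [set v | v \notin S & [set u in S | e v u] == g @: [set x | E x y]].
have bigC y : (4 * #|B| * s) ^ #|B| <= #|C y|.
  apply: hSrich; first by apply/subsetP=> _ /imsetP[x _ ->].
  exact: leq_trans (leq_imset_card _ _) (hdeg y).
have [v [v_inj vC v_indep]] :=
  exists_independent_transversal e_sym e_irr hs hK (leqnn _) bigC.
have vS y : v y \notin S by have := vC y; rewrite inE=> /andP[].
have traceE y : [set u in S | e (v y) u] = g @: [set x | E x y].
  by have := vC y; rewrite inE=> /andP[_ /eqP].
apply: (induced_bip_copy_of_parts e_sym g_inj v_inj).
- by move=> x y; apply: contraNneq (vS y)=> <-.
- by move=> x1 x2; apply: hSind.
- exact: v_indep.
- move=> x y; have := congr1 (fun T : {set V} => g x \in T) (traceE y).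
  by rewrite /= inE gS mem_imset // inE e_sym.
Qed.
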